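(* Let $\mathcal{R}$ be a left-connected rewriting system over a signature $\Sigma$, let $L_1$ and $L_2$ be the left-hand sides of two rules of $\mathcal{R}$, and let $(g_1,g_2\colon G\to L_1+L_2)$ be a gluing scheme that yields a pre-critical pair, in which a node $A$ of $L_1$ and a node $B$ of $L_2$ are glued. Then: (1) if $A\in out(L_1)$ and $B\in in(L_2)$, then no node of $in(L_1)$ is glued to a node of $out(L_2)$; (2) if $A\in in(L_1)$ and $B\in out(L_2)$, then no node of $out(L_1)$ is glued to a node of $in(L_2)$.
   Context: A signature $\Sigma$ is a set of triples $(x,n,m)$ (label, arity, coarity). A $\Sigma$-hypergraph $G=(V,E,s,t,l)$ has finite sets $V$ (nodes), $E$ (hyperedges), maps $s,t\colon E\to V^*$ (lists of sources/targets) and a labelling $l\colon E\to\Sigma$ sending a hyperedge with $n$ sources and $m$ targets to some $(x,n,m)$. Morphisms preserve sources, targets and labels; they form the category $\mathbf{Hyp}_\Sigma$, where colimits are computed componentwise and monos/epis are injective/surjective on nodes and hyperedges. Composition is written $f;g$; $\iota_1,\iota_2$ are coprojections. A hypergraph is discrete if it has no hyperedges. A path is a list of hyperedges $[e_1,\dots,e_n]$ with some target of $e_k$ equal to a source of $e_{k+1}$ for each $k$; it goes from $v$ to $v'$ if $v$ is a source of $e_1$ and $v'$ a target of $e_n$; a cycle is a path with some source of $e_1$ a target of $e_n$. In-degree (out-degree) of a node $v$: number of pairs $(e,i)$ with $v$ the $i$-th target (source) of $e$; $in(H)$, $out(H)$: nodes of in-degree $0$, out-degree $0$. $H$ is ma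 (monogamous acyclic) if it has no cycle and all in- and out-degrees are $\le 1$. A cospan $I\to H\leftarrow O$ with $I,O$ discrete is an ma-cospan if $H$ is ma and the legs are mono with images $in(H)$ and $out(H)$. $H$ is strongly connected if for all $x\in in(H)$, $y\in out(H)$ there is a path from $x$ to $y$. A left-connected rule is a span $L\xleftarrow{[i_L,o_L]}I+O\xrightarrow{[i_R,o_R]}R$ with $I,O$ discrete, $I\to L\leftarrow O$ and $I\to R\leftarrow O$ ma-cospans, $[i_L,o_L]$ mono and $L$ strongly connected; a left-connected rewriting system is a finite set of such rules. A convex match is a mono $m\colon L\to G$ such that every path in $G$ between two nodes of $m(L)$ has all its hyperedges in $m(L)$. A derivation between ma-cospans $n\to G\leftarrow m$ and $n\to H\leftarrow m$ via a rule $L\leftarrow K\to R$ is given by a convex match $L\to G$ and a double-pushout diagram $L\leftarrow K\to R$ over $G\leftarrow C\to H$ with both squares pushouts (the left one a boundary complement, automatic for left-connected systems) commuting with the interface $n+m$; for left-connected systems mono matches are automatically convex and pushout complements exist uniquely. A pre-critical pair consists of two derivations, via rules with left-hand sides $L_1,L_2$, from a common ma-cospan $n\to S\leftarrow m$ with matches $m_1,m_2$ such that $[m_1,m_2]\colon L_1+L_2\to S$ is epi. A gluing scheme for $L_1,L_2$ is a $\Sigma$-hypergraph $G$ with morphisms $g_1,g_2\colon G\to L_1+L_2$; its gluing is the coequaliser $\epsilon\colon L_1+L_2\to S=\mathtt{coeq}(g_1,g_2)$. Two nodes (or hyperedges) $x,x'$ of $L_1+L_2$ are glued if some node (hyperedge)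 $y$ of $G$ has $g_1(y)=x$, $g_2(y)=x'$. The gluing scheme yields a pre-critical pair if $\iota_1;\epsilon$ and $\iota_2;\epsilon$ are mono and $in(S)\xrightarrow{\subseteq}S\xleftarrow{\subseteq}out(S)$ is an ma-cospan; the pre-critical pair is then formed by the (unique) derivations from this ma-cospan with matches $\iota_1;\epsilon$ and $\iota_2;\epsilon$. *)

From HB Require Import structures.
From Stdlib Require List.
From mathcomp Require Import all_boot.

Set Implicit Arguments.
Unset Strict Implicit.
Unset Printing Implicit Defensive.

(* A signature: a type of labels (the triples (x,n,m)), each with its
   arity n and coarity m. *)
Record signature := Signature {
  lab_t : Type;
  arity : lab_t -> nat;
  coarity : lab_t -> nat }.

Record hyp (Sg : signature) := Hyp {
  hV : finType;
  hE : finType;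
  src : hE -> seq hV;
  tgt : hE -> seq hV;
  lab : hE -> lab_t Sg;
  src_ar : forall e, size (src e) = arity (lab e);
  tgt_ar : forall e, size (tgt e) = coarity (lab e) }.

Arguments src {Sg h} e.
Arguments tgt {Sg h} e.
Arguments lab {Sg h} e.

Section Hyp.
Variable Sg : signature.

Record hmor (G H : hyp Sg) := HMor {
  mV : hV G -> hV H;
  mE : hE G -> hE H;
  m_src : forall e, src (mE e) = map mV (src e);
  m_tgt : forall e, tgt (mE e) = map mV (tgt e);
  m_lab : forall e, lab (mE e) = lab e }.

Definition hcomp (G H K : hyp Sg) (f : hmor G H) (g : hmor H K) : hmor G K.
Proof.
refine (@HMor G K (fun v => mV g (mV f v)) (fun e => mE g (mE f e)) _ _ _).
- by move=> e; rewrite m_src m_src -map_comp.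
- by move=> e; rewrite m_tgt m_tgt -map_comp.
- by move=> e; rewrite m_lab m_lab.
Defined.

Definition mor_eq (G H : hyp Sg) (f g : hmor G H) : Prop :=
  (forall v, mV f v = mV g v) /\ (forall e, mE f e = mE g e).

Definition mono (G H : hyp Sg) (f : hmor G H) : Prop :=
  injective (mV f) /\ injective (mE f).

Definition hsum (G H : hyp Sg) : hyp Sg.
Proof.
refine (@Hyp Sg (hV G + hV H)%type (hE G + hE H)%type
  (fun e => match e with inl e => map inl (src e) | inr e => map inr (src e) end)
  (fun e => match e with inl e => map inl (tgt e) | inr e => map inr (tgt e) end)
  (fun e => match e with inl e => lab e | inr e => lab e end) _ _).
- by case=> e; rewrite size_map src_ar.
- by case=> e; rewrite size_map tgt_ar.
Defined.

Definition iota1 (G H : hyp Sg) : hmor G (hsum G H).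
Proof. by refine (@HMor G (hsum G H) inl inl _ _ _). Defined.

Definition iota2 (G H : hyp Sg) : hmor H (hsum G H).
Proof. by refine (@HMor H (hsum G H) inr inr _ _ _). Defined.

Definition copair (G H K : hyp Sg) (f : hmor G K) (g : hmor H K) :
  hmor (hsum G H) K.
Proof.
refine (@HMor (hsum G H) K
  (fun v => match v with inl a => mV f a | inr b => mV g b end)
  (fun e => match e with inl a => mE f a | inr b => mE g b end) _ _ _).
- by case=> e /=; rewrite m_src -map_comp.
- by case=> e /=; rewrite m_tgt -map_comp.
- by case=> e /=; rewrite m_lab.
Defined.

Definition is_coeq (G X S : hyp Sg) (g1 g2 : hmor G X) (eps : hmor X S) : Prop :=
  mor_eq (hcomp g1 eps) (hcomp g2 eps) /\
  forall (T : hyp Sg) (h : hmor X T), mor_eq (hcomp g1 h) (hcomp g2 h) ->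
    exists u : hmor S T, mor_eq (hcomp eps u) h /\
      forall u' : hmor S T, mor_eq (hcomp eps u') h -> mor_eq u' u.

Definition discrete (H : hyp Sg) : Prop := #|hE H| = 0.

Definition follows (H : hyp Sg) (e e' : hE H) : bool :=
  has (fun v => v \in src e') (tgt e).

(* the nonempty list of hyperedges e :: p is a path *)
Definition is_path (H : hyp Sg) (e : hE H) (p : seq (hE H)) : bool :=
  path (@follows H) e p.

Definition path_from (H : hyp Sg) (v v' : hV H) (e : hE H) (p : seq (hE H)) : bool :=
  [&& is_path e p, v \in src e & v' \in tgt (last e p)].

Definition is_cycle (H : hyp Sg) (e : hE H) (p : seq (hE H)) : bool :=
  is_path e p && has (fun v => v \in src e) (tgt (last e p)).

Definition acyclic (H : hyp Sg) : Prop :=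
  forall (e : hE H) (p : seq (hE H)), ~~ is_cycle e p.

Definition indeg (H : hyp Sg) (v : hV H) : nat := \sum_(e : hE H) count_mem v (tgt e).
Definition outdeg (H : hyp Sg) (v : hV H) : nat := \sum_(e : hE H) count_mem v (src e).

Definition in_node (H : hyp Sg) (v : hV H) : bool := indeg v == 0.
Definition out_node (H : hyp Sg) (v : hV H) : bool := outdeg v == 0.

Definition ma (H : hyp Sg) : Prop :=
  acyclic H /\ forall v : hV H, indeg v <= 1 /\ outdeg v <= 1.

Definition ma_cospan (I H O : hyp Sg) (i : hmor I H) (o : hmor O H) : Prop :=
  [/\ discrete I, discrete O, ma H, mono i & mono o] /\
  (forall v, (exists x, mV i x = v) <-> in_node v) /\
  (forall v, (exists x, mV o x = v) <-> out_node v).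

Definition strongly_connected (H : hyp Sg) : Prop :=
  forall x y : hV H, in_node x -> out_node y ->
    exists (e : hE H) (p : seq (hE H)), path_from x y e p.

Definition discr_sub (H : hyp Sg) (P : pred (hV H)) : hyp Sg.
Proof.
refine (@Hyp Sg {v : hV H | P v} void (fun e => match e with end)
  (fun e => match e with end) (fun e => match e with end) _ _); by case.
Defined.

Definition discr_incl (H : hyp Sg) (P : pred (hV H)) : hmor (discr_sub P) H.
Proof.
refine (@HMor (discr_sub P) H val (fun e => match e with end) _ _ _); by case.
Defined.

Record lc_rule := LCRule {
  rL : hyp Sg; rR : hyp Sg; rI : hyp Sg; rO : hyp Sg;
  r_iL : hmor rI rL; r_oL : hmor rO rL;
  r_iR : hmor rI rR; r_oR : hmor rO rR;
  r_cosL : ma_cospan r_iL r_oL;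
  r_cosR : ma_cospan r_iR r_oR;
  r_monoL : mono (copair r_iL r_oL);
  r_scL : strongly_connected rL }.

(* a left-connected rewriting system: a finite set (list) of such rules *)
Definition lc_system := seq lc_rule.

Definition glued (G X : hyp Sg) (g1 g2 : hmor G X) (x x' : hV X) : Prop :=
  exists y : hV G, mV g1 y = x /\ mV g2 y = x'.

Definition yields_pcp (L1 L2 G : hyp Sg) (g1 g2 : hmor G (hsum L1 L2)) : Prop :=
  exists (S : hyp Sg) (eps : hmor (hsum L1 L2) S),
    [/\ is_coeq g1 g2 eps,
        mono (hcomp (iota1 L1 L2) eps),
        mono (hcomp (iota2 L1 L2) eps) &
        ma_cospan (discr_incl (@in_node S)) (discr_incl (@out_node S))].

End Hyp.

(* If a in(L1) node a were glued to an out(L2) node b while the out(L1) node A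
   is glued to the in(L2) node B, strong connectivity would give a path from a
   to A in L1 and from B to b in L2. Their images in the gluing S meet at
   A = B and close up at b = a, giving a cycle in S, which is acyclic because
   in(S) -> S <- out(S) is an ma-cospan. Case (2) is case (1) with the roles of
   L1 and L2 exchanged. *)
From Stdlib Require List.
From mathcomp Require Import all_boot.

Set Implicit Arguments.
Unset Strict Implicit.

Section Paths.
Context {Sg : signature}.
Implicit Types G H : hyp Sg.

Lemma map_follows G H (f : hmor G H) e e' :
  follows e e' -> follows (mE f e) (mE f e').
Proof.
case/hasP=> v vt vs; apply/hasP; exists (mV f v).
  by rewrite m_tgt map_f.
by rewrite m_src map_f.
Qed.

Lemma map_is_path G H (f : hmor G H) e p :
  is_path e p -> is_path (mE f e) (map (mE f) p).
Proof.
elim: p e => [|e' p IHp] e //= /andP [fee' pe'].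
by rewrite map_follows //= IHp.
Qed.

Lemma map_path_from G H (f : hmor G H) x y e p :
  path_from x y e p -> path_from (mV f x) (mV f y) (mE f e) (map (mE f) p).
Proof.
case/and3P=> pe xe ye; apply/and3P; split.
- exact: map_is_path.
- by rewrite m_src map_f.
- by rewrite last_map m_tgt map_f.
Qed.

Lemma path_from_cat_cycle H (x y : hV H) e p e' p' :
  path_from x y e p -> path_from y x e' p' -> is_cycle e (p ++ e' :: p').
Proof.
case/and3P=> pe xe ye; case/and3P=> pe' ye' xe'.
apply/andP; split.
  rewrite /is_path in pe pe' *; rewrite cat_path pe /= pe' andbT.
  by apply/hasP; exists y.
by rewrite last_cat; apply/hasP; exists x.
Qed.

Lemma acyclic_no_round_trip H (x y : hV H) e p e' p' :
  acyclic H -> path_from x y e p -> path_from y x e' p' -> False.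
Proof.
move=> acH pxy pyx.
by have := acH e (p ++ e' :: p'); rewrite (path_from_cat_cycle pxy pyx).
Qed.

Lemma strongly_connected_image_path G H (f : hmor G H) (x y : hV G) :
  strongly_connected G -> in_node x -> out_node y ->
  exists e p, path_from (mV f x) (mV f y) e p.
Proof.
move=> scG inx outy; have [e [p pxy]] := scG x y inx outy.
by exists (mE f e), (map (mE f) p); exact: map_path_from.
Qed.

Lemma acyclic_no_cross_gluing (L1 L2 S : hyp Sg) (f1 : hmor L1 S) (f2 : hmor L2 S)
    (a A : hV L1) (B b : hV L2) :
  acyclic S -> strongly_connected L1 -> strongly_connected L2 ->
  in_node a -> out_node A -> in_node B -> out_node b ->
  mV f1 A = mV f2 B -> mV f1 a = mV f2 b -> False.
Proof.
move=> acS sc1 sc2 ina outA inB outb eAB eab.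
have [e [p paA]] := strongly_connected_image_path f1 sc1 ina outA.
have [e' [p' pBb]] := strongly_connected_image_path f2 sc2 inB outb.
rewrite -eAB -eab in pBb.
exact: acyclic_no_round_trip acS paA pBb.
Qed.

Lemma coeq_glued G X S (g1 g2 : hmor G X) (eps : hmor X S) (x x' : hV X) :
  is_coeq g1 g2 eps -> glued g1 g2 x x' -> mV eps x = mV eps x'.
Proof. by case=> [[eq_eps _] _] [y [<- <-]]; exact: eq_eps. Qed.

End Paths.

Theorem mainTheorem3 (Sg : signature) (Rs : lc_system Sg) (r1 r2 : lc_rule Sg)
  (Hr1 : List.In r1 Rs) (Hr2 : List.In r2 Rs)
  (G : hyp Sg) (g1 g2 : hmor G (hsum (rL r1) (rL r2)))
  (A : hV (rL r1)) (B : hV (rL r2)) :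
  yields_pcp g1 g2 ->
  glued g1 g2 (inl A : hV (hsum (rL r1) (rL r2))) (inr B) ->
  (out_node A -> in_node B ->
     forall (a : hV (rL r1)) (b : hV (rL r2)), in_node a -> out_node b ->
       ~ glued g1 g2 (inl a : hV (hsum (rL r1) (rL r2))) (inr b)) /\
  (in_node A -> out_node B ->
     forall (a : hV (rL r1)) (b : hV (rL r2)), out_node a -> in_node b ->
       ~ glued g1 g2 (inl a : hV (hsum (rL r1) (rL r2))) (inr b)).
Proof.
case=> S [eps [coeq _ _ [[_ _ [acS _] _ _] _]]].
move=> /(coeq_glued coeq) eAB.
set f1 := hcomp (iota1 (rL r1) (rL r2)) eps.
set f2 := hcomp (iota2 (rL r1) (rL r2)) eps.
have sc1 := @r_scL _ r1; have sc2 := @r_scL _ r2.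
split=> [outA inB a b ina outb | inA outB a b outa inb] /(coeq_glued coeq) eab.
- exact: (acyclic_no_cross_gluing (f1 := f1) (f2 := f2)
    acS sc1 sc2 ina outA inB outb eAB eab).
- exact: (acyclic_no_cross_gluing (f1 := f2) (f2 := f1)
    acS sc2 sc1 inb outB inA outa (esym eAB) (esym eab)).
Qed.
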